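(* Let $G$ and $H$ be finite graphs such that $\Delta(G)<n(H)$ and $\gamma(H)=1$. Then $\Gamma_{\rm S}(G,H)=\gamma_{\rm S}(G,H)=n(G)$.
   Context: All graphs are finite and simple; $\Delta(G)$ is the maximum degree of $G$, $n(X)=|V(X)|$, and $\gamma(X)$ is the domination number. For graphs $G,H$ and a function $f\colon V(G)\to V(H)$, the Sierpiński product $G\otimes_f H$ is the graph with vertex set $V(G)\times V(H)$ and edges of two types: (type 1) $(g,h)(g,h')$ for every $g\in V(G)$ and every edge $hh'\in E(H)$; (type 2) $(g,f(g'))(g',f(g))$ for every edge $gg'\in E(G)$. $\gamma_{\rm S}(G,H)=\min_{f}\gamma(G\otimes_f H)$ and $\Gamma_{\rm S}(G,H)=\max_{f}\gamma(G\otimes_f H)$, over all functions $f\colon V(G)\to V(H)$. *)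

From mathcomp Require Import all_boot.
Set Implicit Arguments. Unset Strict Implicit. Unset Printing Implicit Defensive.

Record sgraph := SGraph {
  vert : finType;
  adj : rel vert;
  adj_sym : symmetric adj;
  adj_irr : irreflexive adj }.

Definition norder (G : sgraph) : nat := #|vert G|.

(* degree and maximum degree Delta(G) (0 for the empty graph) *)
Definition degree (G : sgraph) (v : vert G) : nat := #|[set w | adj v w]|.
Definition maxdeg (G : sgraph) : nat := \max_(v : vert G) degree v.

Definition dominating (G : sgraph) (D : {set vert G}) : bool :=
  [forall v, (v \in D) || [exists w in D, adj v w]].
Definition domnum (G : sgraph) : nat :=
  \big[minn/#|vert G|]_(D : {set vert G} | dominating D) #|D|.

Definition sprod_adj (G H : sgraph) (f : vert G -> vert H)
    (x y : (vert G * vert H)%type) : bool :=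
  ((x.1 == y.1) && adj x.2 y.2)
  || [&& adj x.1 y.1, x.2 == f y.1 & y.2 == f x.1].

Lemma sprod_adj_sym G H f : symmetric (@sprod_adj G H f).
Proof.
move=> [g h] [g' h']; rewrite /sprod_adj /=.
rewrite eq_sym (adj_sym h') (adj_sym g').
by case: (g' == g); case: (adj g g'); case: (h == f g'); case: (h' == f g).
Qed.

Lemma sprod_adj_irr G H f : irreflexive (@sprod_adj G H f).
Proof. by move=> [g h]; rewrite /sprod_adj /= !adj_irr andbF. Qed.

Definition sprod (G H : sgraph) (f : vert G -> vert H) : sgraph :=
  @SGraph (vert G * vert H)%type (sprod_adj f) (@sprod_adj_sym G H f)
          (@sprod_adj_irr G H f).

Definition gammaS (G H : sgraph) : nat :=
  \big[minn/(#|vert G| * #|vert H|)]_(f : {ffun vert G -> vert H})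
     domnum (sprod (fun g => f g)).
Definition GammaS (G H : sgraph) : nat :=
  \max_(f : {ffun vert G -> vert H}) domnum (sprod (fun g => f g)).

From mathcomp Require Import all_boot all_order.
Import Order.TTheory.

Set Implicit Arguments.
Unset Strict Implicit.
Unset Printing Implicit Defensive.

(* Proof of Proposition 2.3: if Delta(G) < n(H) and gamma(H) = 1, then every
   Sierpinski product G (x)_f H has domination number n(G), hence so do its
   minimum gamma_S(G,H) and maximum Gamma_S(G,H) over all f.
   - gamma(H) = 1 yields a universal vertex h0 of H.
   - Upper bound: the "h0-section" {(g, h0) | g in V(G)} dominates G (x)_f H,
     since every (g, h) is (g, h0) or adjacent to it inside the H-layer of g.
   - Lower bound: a dominating set D meets every H-layer {g} x V(H).  Otherwise
     each (g, h) is dominated through a type-2 edge from some (g', f g) with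
     g' ~ g and h = f g', so V(H) is covered by f(N(g)) and n(H) <= deg g,
     contradicting Delta(G) < n(H).  Projecting D to V(G) gives |D| >= n(G). *)

Section Domination.
Variable X : sgraph.

(* The whole vertex set is dominating, so the default value of the minimum
   defining domnum is itself attained by a dominating set. *)
Lemma dominatingT : dominating [set: vert X].
Proof. by apply/forallP => v; rewrite inE. Qed.

Lemma domnum_le (D : {set vert X}) : dominating D -> domnum X <= #|D|.
Proof. by move=> domD; rewrite /domnum -minEnat -leEnat; apply: bigmin_le_cond. Qed.

Lemma domnum_ge (n : nat) :
  (forall D : {set vert X}, dominating D -> n <= #|D|) -> n <= domnum X.
Proof.
move=> lbD; rewrite /domnum -minEnat -leEnat; apply/bigmin_geP; split => //.
by rewrite -cardsT; apply: lbD; apply: dominatingT.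
Qed.

Lemma domnum_attained : exists2 D : {set vert X}, dominating D & #|D| = domnum X.
Proof.
rewrite /domnum -minEnat (bigmin_eq_arg _ setT); last 2 first.
- exact: dominatingT.
- by move=> D _; rewrite -cardsT leEnat subset_leq_card ?subsetT.
by case: arg_minP => [|D domD _]; [exact: dominatingT | exists D].
Qed.

Lemma domnum1_universal :
  domnum X = 1 -> exists v : vert X, forall w, (w == v) || adj w v.
Proof.
move=> dom1; have [D domD] := domnum_attained; rewrite dom1.
move/eqP/cards1P => [v D_eq]; exists v => w.
move/forallP: domD => /(_ w); rewrite D_eq inE.
by case/orP=> [-> // | /existsP [u]]; rewrite inE => /andP [/eqP -> ->]; rewrite orbT.
Qed.

End Domination.

Lemma degree_le_maxdeg (G : sgraph) (g : vert G) : degree g <= maxdeg G.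
Proof. exact: leq_bigmax. Qed.

Section SierpinskiProduct.
Variables (G H : sgraph) (f : vert G -> vert H).

(* If D avoids the H-layer of g, every (g, h) is dominated across a type-2
   edge, so h lies in the image of the neighbourhood of g under f. *)
Lemma layer_covered_by_image (D : {set vert (sprod f)}) (g : vert G) :
  dominating D -> [forall h, (g, h) \notin D] ->
  [set: vert H] \subset f @: [set g' | adj g g'].
Proof.
move=> domD /forallP avoidD; apply/subsetP => h _.
move/forallP: domD => /(_ (g, h)); rewrite (negbTE (avoidD h)) /=.
case/existsP=> [[g' h'] /andP [inD]]; rewrite /= /sprod_adj /=.
case/orP=> [/andP [/eqP eq_g _] | /and3P [adj_gg' /eqP -> _]].
  by move: (avoidD h'); rewrite eq_g inD.
by apply: imset_f; rewrite inE.
Qed.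

Lemma dominating_meets_layer (D : {set vert (sprod f)}) (g : vert G) :
  dominating D -> degree g < norder H -> exists h, (g, h) \in D.
Proof.
move=> domD small_deg; apply/existsP; apply: contraT.
rewrite negb_exists => /(layer_covered_by_image domD) /subset_leq_card.
rewrite cardsT => cover; move: small_deg; rewrite ltnNge /norder.
by rewrite (leq_trans cover) ?leq_imset_card.
Qed.

(* Lower bound: a dominating set of the product projects onto V(G). *)
Lemma sprod_domnum_lower : maxdeg G < norder H -> #|vert G| <= domnum (sprod f).
Proof.
move=> deg_lt; apply: domnum_ge => D domD.
have onto : [set: vert G] \subset [set x.1 | x in D].
  apply/subsetP => g _.
  have small_deg := leq_ltn_trans (degree_le_maxdeg g) deg_lt.
  have [h gh_in] := dominating_meets_layer domD small_deg.
  by apply/imsetP; exists (g, h).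
by rewrite -cardsT (leq_trans (subset_leq_card onto)) ?leq_imset_card.
Qed.

Lemma section_dominating (h0 : vert H) :
  (forall h, (h == h0) || adj h h0) ->
  @dominating (sprod f) [set (g, h0) | g : vert G].
Proof.
move=> univ; apply/forallP => -[g h]; case/orP: (univ h) => [/eqP -> | adj_hh0].
  by rewrite imset_f.
apply/orP; right; apply/existsP; exists (g, h0).
by rewrite imset_f //= /sprod_adj /= eqxx adj_hh0.
Qed.

(* Upper bound: the h0-section has exactly n(G) vertices. *)
Lemma sprod_domnum_upper (h0 : vert H) :
  (forall h, (h == h0) || adj h h0) -> domnum (sprod f) <= #|vert G|.
Proof.
move=> univ; have inj_section : injective (fun g : vert G => (g, h0)).
  by move=> g g' [].
by rewrite (leq_trans (domnum_le (section_dominating univ))) ?card_imset.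
Qed.

End SierpinskiProduct.

Theorem proposition2p3 (G H : sgraph) :
  maxdeg G < norder H -> domnum H = 1 ->
  GammaS G H = norder G /\ gammaS G H = norder G.
Proof.
move=> deg_lt /domnum1_universal [h0 univ].
have domnum_prod (f : {ffun vert G -> vert H}) :
    domnum (sprod (fun g => f g)) = #|vert G|.
  by apply/eqP; rewrite eqn_leq sprod_domnum_lower // (sprod_domnum_upper _ univ).
(* The default value n(G) n(H) of the minimum defining gammaS is >= n(G). *)
have default_ge : #|vert G| <= #|vert G| * #|vert H|.
  by rewrite leq_pmulr //; apply/card_gt0P; exists h0.
rewrite /GammaS /gammaS /norder; split; apply/eqP; rewrite eqn_leq.
- apply/andP; split; first by apply/bigmax_leqP => f _; rewrite domnum_prod.
  by rewrite -{1}(domnum_prod [ffun=> h0]) leq_bigmax.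
- rewrite -minEnat; apply/andP; split.
    by rewrite -{2}(domnum_prod [ffun=> h0]) -leEnat; apply: bigmin_le_cond.
  by rewrite -leEnat; apply/bigmin_geP; split => // f _; rewrite domnum_prod.
Qed.
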